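(* Let $f_1,\dots,f_n\colon(c_1,c_2)\to\mathbb R$ and $\eta\colon(c_1,c_2)\times\mathbb R\to(0,\infty)$ be smooth. The manifold $(c_1,c_2)\times\mathbb R^{n+1}$ with the metric $(\star)$ is complete if $(c_1,c_2)=\mathbb R$ and there exists a positive continuous function $r\colon\mathbb R\to(0,\infty)$ with $\eta(x,u)\ge r(u)$ for all $x,u$.
   Context: The metric $(\star)$: on $(c_1,c_2)\times\mathbb R^{n+1}$ with coordinates $(x,u,v_1,\dots,v_n)$, with conventions $v_0=u$, $v_{-1}=v_{n+1}=0$, $f_0=f_{n+1}=0$, $g_{\eta,f}=\eta(x,u)^2dx^2+\sum_{j=0}^n\big(dv_j+(v_{j-1}f_j(x)-v_{j+1}f_{j+1}(x))dx\big)^2$. *)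

From Stdlib Require Import Reals Lra Lia List.
Import ListNotations.
From Coquelicot Require Import Coquelicot.
Open Scope R_scope.

Definition smooth1 (g : R -> R) : Prop := forall (k : nat) (x : R), ex_derive_n g k x.

(* Iterated partial derivatives of h : R -> R -> R along a list of directions
   (true = d/dx in the first variable, false = d/du in the second variable);
   the head of the list is the last derivative applied. *)
Fixpoint pdiff (l : list bool) (h : R -> R -> R) : R -> R -> R :=
  match l with
  | nil => h
  | cons b l' =>
      let g := pdiff l' h in
      if b then (fun x u => Derive (fun y => g y u) x)
           else (fun x u => Derive (fun y => g x y) u)
  end.

Definition smooth2 (h : R -> R -> R) : Prop :=
  forall (l : list bool) (x u : R),
    continuous (fun p : R * R => pdiff l h (fst p) (snd p)) (x, u) /\
    ex_derive (fun y => pdiff l h y u) x /\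
    ex_derive (fun y => pdiff l h x y) u.

(* Points of R x R^{n+1} are encoded as p : nat -> R with
   p 0 = x, p (S j) = v_j (j = 0..n, v_0 = u), and p k = 0 for k > n+1. *)
Definition in_manifold (n : nat) (p : nat -> R) : Prop :=
  forall k : nat, (n + 1 < k)%nat -> p k = 0.

Definition fcoef (n : nat) (f : nat -> R -> R) (j : nat) (x : R) : R :=
  if andb (1 <=? j)%nat (j <=? n)%nat then f j x else 0.

(* v_{j-1} with v_{-1} = 0 (recall v_i = p (S i)). *)
Definition vprev (p : nat -> R) (j : nat) : R :=
  match j with O => 0 | S i => p (S i) end.

(* v_{j+1} with v_{n+1} = 0. *)
Definition vnext (n : nat) (p : nat -> R) (j : nat) : R :=
  if (j + 1 <=? n)%nat then p (j + 2)%nat else 0.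

(* The metric (star) at point p evaluated on tangent vector w (same encoding):
   eta(x,u)^2 dx^2 + sum_{j=0}^n (dv_j + (v_{j-1} f_j(x) - v_{j+1} f_{j+1}(x)) dx)^2. *)
Definition gstar (n : nat) (f : nat -> R -> R) (eta : R -> R -> R)
    (p w : nat -> R) : R :=
  (eta (p 0%nat) (p 1%nat))^2 * (w 0%nat)^2 +
  sum_f_R0 (fun j =>
     (w (S j) + (vprev p j * fcoef n f j (p 0%nat)
                 - vnext n p j * fcoef n f (S j) (p 0%nat)) * w 0%nat)^2) n.

(* Admissible curves from p to q: C^1 curves (given componentwise, parameter t in R,
   used on [0,1]) lying in the manifold. *)
Definition adm_curve (n : nat) (c : nat -> R -> R) (p q : nat -> R) : Prop :=
  (forall t, in_manifold n (fun k => c k t)) /\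
  (forall k t, ex_derive (c k) t /\ continuous (Derive (c k)) t) /\
  (forall k, c k 0 = p k) /\ (forall k, c k 1 = q k).

Definition curve_length (n : nat) (f : nat -> R -> R) (eta : R -> R -> R)
    (c : nat -> R -> R) : R :=
  RInt (fun t => sqrt (gstar n f eta (fun k => c k t) (fun k => Derive (c k) t))) 0 1.

Definition rdist (n : nat) (f : nat -> R -> R) (eta : R -> R -> R)
    (p q : nat -> R) : Rbar :=
  Glb_Rbar (fun L => exists c, adm_curve n c p q /\ L = curve_length n f eta c).

Definition riem_complete (n : nat) (f : nat -> R -> R) (eta : R -> R -> R) : Prop :=
  forall s : nat -> (nat -> R),
    (forall m, in_manifold n (s m)) ->
    (forall eps : R, 0 < eps -> exists N : nat, forall m k : nat,
        (N <= m)%nat -> (N <= k)%nat -> Rbar_lt (rdist n f eta (s m) (s k)) (Finite eps)) ->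
    exists q : nat -> R, in_manifold n q /\
      (forall eps : R, 0 < eps -> exists N : nat, forall m : nat,
        (N <= m)%nat -> Rbar_lt (rdist n f eta (s m) q) (Finite eps)).

(* The coefficients a_j form a skew matrix (sum_j v_j a_j = 0), so the radius
   P = sqrt (1 + |v|^2) grows at most at unit speed along any curve.  Hence a
   curve of length L <= 1 starting in a fixed region keeps its fibre values in a
   compact set, where eta >= min r > 0 bounds |dx| by the speed; then x stays
   bounded, the f_j are bounded there, and every coordinate moves by at most C L
   ([short_curve_displacement]).  Thus an rdist-Cauchy sequence is Cauchy in
   coordinates and has a coordinatewise limit q; conversely straight segments
   show that coordinatewise convergence implies rdist-convergence
   ([segment_short]). *)

From Stdlib Require Import Reals Lra Lia Classical.
From Coquelicot Require Import Coquelicot.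
Open Scope R_scope.

(* Pointwise continuity of real functions built from continuous pieces; the
   functions are left implicit so that [apply] can infer them from the goal. *)
Lemma cont_plus (g h : R -> R) x :
  continuous g x -> continuous h x -> continuous (fun t => g t + h t) x.
Proof. intros; apply (continuous_plus g h); auto. Qed.

Lemma cont_mult (g h : R -> R) x :
  continuous g x -> continuous h x -> continuous (fun t => g t * h t) x.
Proof. intros; apply (continuous_mult g h); auto. Qed.

Lemma cont_minus (g h : R -> R) x :
  continuous g x -> continuous h x -> continuous (fun t => g t - h t) x.
Proof. intros; apply (continuous_minus g h); auto. Qed.

Lemma cont_pow2 (g : R -> R) x : continuous g x -> continuous (fun t => (g t)^2) x.
Proof.
  intro Hg. apply (continuous_ext (fun t => g t * (g t * 1))); [intros; reflexivity|].
  apply cont_mult; auto. apply cont_mult; auto. apply continuous_const.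
Qed.

Lemma cont_sum (G : nat -> R -> R) N x : (forall j, (j <= N)%nat -> continuous (G j) x) ->
  continuous (fun t => sum_f_R0 (fun j => G j t) N) x.
Proof.
  induction N; intros HG; simpl; [apply HG; lia|].
  apply cont_plus; [apply IHN; intros; apply HG|apply HG]; lia.
Qed.

Lemma sum_telescope (b : nat -> R) N :
  sum_f_R0 (fun j => b j - b (S j)) N = b 0%nat - b (S N).
Proof. induction N; simpl; [reflexivity|]. rewrite IHN. ring. Qed.

Lemma sum_term_le (a : nat -> R) N j :
  (forall i, 0 <= a i) -> (j <= N)%nat -> a j <= sum_f_R0 a N.
Proof.
  intros Ha Hj. induction N; simpl.
  - replace j with 0%nat by lia. lra.
  - destruct (Nat.eq_dec j (S N)) as [->|Hne].
    + pose proof (cond_pos_sum a N Ha). lra.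
    + pose proof (Ha (S N)). assert (a j <= sum_f_R0 a N) by (apply IHN; lia). lra.
Qed.

Lemma sumsq_nonneg (a : nat -> R) N : 0 <= sum_f_R0 (fun j => (a j)^2) N.
Proof. apply cond_pos_sum. intro; apply pow2_ge_0. Qed.

Lemma sum_cauchy_schwarz (a b : nat -> R) N :
  (sum_f_R0 (fun j => a j * b j) N)^2 <=
  sum_f_R0 (fun j => (a j)^2) N * sum_f_R0 (fun j => (b j)^2) N.
Proof.
  induction N; cbn [sum_f_R0]; [nra|].
  set (X := sum_f_R0 (fun j => a j * b j) N) in *.
  set (A := sum_f_R0 (fun j => (a j)^2) N) in *.
  set (B := sum_f_R0 (fun j => (b j)^2) N) in *.
  assert (A0 : 0 <= A) by apply sumsq_nonneg.
  assert (B0 : 0 <= B) by apply sumsq_nonneg.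
  set (a' := a (S N)). set (b' := b (S N)).
  (* the cross term 2 X a' b' is dominated by A b'^2 + B a'^2 *)
  assert (Hsq : (2 * X * a' * b')^2 <= (A * b'^2 + B * a'^2)^2).
  { assert (0 <= (A * b'^2 - B * a'^2)^2) by apply pow2_ge_0.
    assert (0 <= a'^2 * b'^2 * (A * B - X^2)) by
      (apply Rmult_le_pos; [apply Rmult_le_pos; apply pow2_ge_0|lra]).
    nra. }
  assert (Hcross : 2 * X * a' * b' <= A * b'^2 + B * a'^2).
  { apply Rsqr_incr_0_var; [unfold Rsqr; simpl in Hsq; lra|].
    apply Rplus_le_le_0_compat; apply Rmult_le_pos; auto; apply pow2_ge_0. }
  nra.
Qed.

Lemma is_derive_sum_f_R0 (G : nat -> R -> R) (dG : nat -> R) N t :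
  (forall j, is_derive (G j) t (dG j)) ->
  is_derive (fun t => sum_f_R0 (fun j => G j t) N) t (sum_f_R0 dG N).
Proof.
  intro H. induction N; simpl; [apply H|].
  apply (is_derive_plus (fun t => sum_f_R0 (fun j => G j t) N) (G (S N))); auto.
Qed.

Lemma sq_le_of_abs_le (x y : R) : Rabs x <= y -> x^2 <= y^2.
Proof. intro H. rewrite <- pow2_abs. pose proof (Rabs_pos x). apply pow_incr. lra. Qed.

Lemma increment_le_integral (h h' g : R -> R) (K : R) :
  (forall t, is_derive h t (h' t)) -> (forall t, continuous g t) ->
  (forall t, 0 <= t <= 1 -> h' t <= K * g t) ->
  forall s, 0 <= s <= 1 -> h s - h 0 <= K * RInt g 0 s.
Proof.
  intros Hh Hg Hb s Hs.
  set (H := fun t => h t - K * RInt g 0 t).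
  assert (HI : forall t, is_derive (fun t => RInt g 0 t) t (g t)).
  { intro t. apply (is_derive_RInt g (fun t => RInt g 0 t) 0 t); [|auto].
    apply filter_forall. intro b. apply (@RInt_correct R_CompleteNormedModule).
    apply (@ex_RInt_continuous R_CompleteNormedModule g 0 b). intros; auto. }
  assert (dH : forall t, is_derive H t (h' t - K * g t)).
  { intro t. apply (is_derive_minus h (fun t => K * RInt g 0 t)); auto.
    apply (is_derive_scal (fun t => RInt g 0 t)). auto. }
  destruct (MVT_gen H 0 s (fun t => h' t - K * g t)) as [c [Hc Hc2]].
  - intros x _. apply dH.
  - intros x _. apply continuity_pt_filterlim.
    apply (@ex_derive_continuous R_AbsRing R_NormedModule H). eexists; apply dH.
  - rewrite Rmin_left in Hc by lra. rewrite Rmax_right in Hc by lra.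
    unfold H in Hc2. rewrite RInt_point in Hc2. change (zero : R) with 0 in Hc2.
    assert (h' c - K * g c <= 0) by (specialize (Hb c); lra).
    assert ((h' c - K * g c) * (s - 0) <= 0) by nra.
    lra.
Qed.

Lemma abs_increment_le_integral (h g : R -> R) K :
  (forall t, ex_derive h t) -> (forall t, continuous g t) ->
  (forall t, 0 <= t <= 1 -> Rabs (Derive h t) <= K * g t) ->
  forall s, 0 <= s <= 1 -> Rabs (h s - h 0) <= K * RInt g 0 s.
Proof.
  intros Hh Hg Hb s Hs. apply Rabs_le. split.
  - assert (- h s - - h 0 <= K * RInt g 0 s); [|lra].
    apply (increment_le_integral (fun t => - h t) (fun t => - Derive h t) g K); auto.
    + intro t. apply (is_derive_opp h). apply Derive_correct. auto.
    + intros t Ht. specialize (Hb t Ht). apply Rabs_le_between in Hb. lra.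
  - apply (increment_le_integral h (Derive h) g K); auto.
    + intro t. apply Derive_correct. auto.
    + intros t Ht. specialize (Hb t Ht). apply Rabs_le_between in Hb. lra.
Qed.

Lemma RInt_nonneg_initial (g : R -> R) s :
  (forall t, continuous g t) -> (forall t, 0 <= g t) -> 0 <= s <= 1 ->
  0 <= RInt g 0 s /\ RInt g 0 s <= RInt g 0 1.
Proof.
  intros Hg Hp Hs.
  assert (Ex : forall a b, ex_RInt g a b).
  { intros a b. apply (@ex_RInt_continuous R_CompleteNormedModule). intros; auto. }
  assert (0 <= RInt g 0 s) by (apply RInt_ge_0; auto; lra).
  assert (0 <= RInt g s 1) by (apply RInt_ge_0; auto; lra).
  split; auto.
  rewrite <- (RInt_Chasles g 0 s 1) by auto.
  change (plus (RInt g 0 s) (RInt g s 1)) with (RInt g 0 s + RInt g s 1). lra.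
Qed.

Lemma segment_bound (g : nat -> R -> R) a b N : a <= b -> (forall j x, continuous (g j) x) ->
  exists F, 0 <= F /\ forall j, (j <= N)%nat -> forall x, a <= x <= b -> Rabs (g j x) <= F.
Proof.
  intros Hab Hg.
  assert (single : forall j, exists M, 0 <= M /\ forall x, a <= x <= b -> Rabs (g j x) <= M).
  { intro j. destruct (continuity_ab_maj (fun x => Rabs (g j x)) a b Hab) as [xm [HM _]].
    { intros c _. apply continuity_pt_filterlim. apply continuous_Rabs_comp. auto. }
    exists (Rabs (g j xm)). split; [apply Rabs_pos|auto]. }
  induction N.
  - destruct (single 0%nat) as [M [HM0 HM]]. exists M. split; auto.
    intros j Hj. replace j with 0%nat by lia. auto.
  - destruct IHN as [F [F0 HF]]. destruct (single (S N)) as [M [HM0 HM]].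
    exists (Rmax F M). split; [apply Rle_trans with F; auto; apply Rmax_l|].
    intros j Hj x Hx. destruct (Nat.eq_dec j (S N)) as [->|Hne].
    + apply Rle_trans with M; auto; apply Rmax_r.
    + apply Rle_trans with F; [apply HF; auto; lia|apply Rmax_l].
Qed.

Lemma local_bound (g : nat -> R -> R) x0 N : (forall j, continuous (g j) x0) ->
  exists δ, 0 < δ /\ exists F, 0 <= F /\
    forall j, (j <= N)%nat -> forall x, Rabs (x - x0) < δ -> Rabs (g j x) <= F.
Proof.
  intro Hg.
  assert (single : forall j, exists δ, 0 < δ /\
            forall x, Rabs (x - x0) < δ -> Rabs (g j x) <= Rabs (g j x0) + 1).
  { intro j. destruct (proj1 (filterlim_locally _ _) (Hg j) (mkposreal 1 Rlt_0_1)) as [δ Hδ].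
    exists δ. split; [apply cond_pos|]. intros x Hx.
    assert (Hb : Rabs (g j x - g j x0) < 1) by exact (Hδ x Hx).
    pose proof (Rabs_triang (g j x - g j x0) (g j x0)).
    replace (g j x - g j x0 + g j x0) with (g j x) in H by ring. lra. }
  induction N.
  - destruct (single 0%nat) as [δ [Hδ H]]. exists δ. split; auto.
    exists (Rabs (g 0%nat x0) + 1). split; [pose proof (Rabs_pos (g 0%nat x0)); lra|].
    intros j Hj. replace j with 0%nat by lia. auto.
  - destruct IHN as [δ [Hδ [F [F0 HF]]]]. destruct (single (S N)) as [δ' [Hδ' H]].
    exists (Rmin δ δ'). split; [apply Rmin_pos; auto|].
    exists (Rmax F (Rabs (g (S N) x0) + 1)). split; [apply Rle_trans with F; auto; apply Rmax_l|].
    intros j Hj x Hx. pose proof (Rmin_l δ δ'). pose proof (Rmin_r δ δ').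
    destruct (Nat.eq_dec j (S N)) as [->|Hne].
    + apply Rle_trans with (Rabs (g (S N) x0) + 1); [apply H; lra|apply Rmax_r].
    + apply Rle_trans with F; [apply HF; [lia|lra]|apply Rmax_l].
Qed.

Lemma local_bound2 (h : R -> R -> R) x0 u0 :
  continuous (fun p : R * R => h (fst p) (snd p)) (x0, u0) ->
  exists δ, 0 < δ /\ forall x u, Rabs (x - x0) < δ -> Rabs (u - u0) < δ ->
    Rabs (h x u) <= Rabs (h x0 u0) + 1.
Proof.
  intro Hh. destruct (proj1 (filterlim_locally _ _) Hh (mkposreal 1 Rlt_0_1)) as [δ Hδ].
  exists δ. split; [apply cond_pos|]. intros x u Hx Hu.
  assert (Hb : Rabs (h x u - h x0 u0) < 1) by exact (Hδ (x, u) (conj Hx Hu)).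
  pose proof (Rabs_triang (h x u - h x0 u0) (h x0 u0)).
  replace (h x u - h x0 u0 + h x0 u0) with (h x u) in H by ring. lra.
Qed.

Lemma Glb_Rbar_le_member (E : R -> Prop) L : E L -> Rbar_le (Glb_Rbar E) (Finite L).
Proof. intro H. exact (proj1 (Glb_Rbar_correct E) L H). Qed.

Lemma Glb_Rbar_lt_witness (E : R -> Prop) e :
  Rbar_lt (Glb_Rbar E) (Finite e) -> exists L, E L /\ L < e.
Proof.
  intro H. apply NNPP. intro Hn.
  assert (Hlb : is_lb_Rbar E (Finite e)).
  { intros x Hx. simpl. apply Rnot_lt_le. intro Hlt. apply Hn. exists x; auto. }
  apply (Rbar_lt_not_le _ _ H (proj2 (Glb_Rbar_correct E) _ Hlb)).
Qed.

Lemma uniform_cv_finite (u : nat -> nat -> R) (l : nat -> R) M :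
  (forall i, Un_cv (fun m => u m i) (l i)) -> forall e, 0 < e ->
  exists N, forall m, (N <= m)%nat -> forall i, (i <= M)%nat -> Rabs (u m i - l i) < e.
Proof.
  intros Hc e He. induction M.
  - destruct (Hc 0%nat e He) as [N HN]. exists N. intros m Hm i Hi.
    replace i with 0%nat by lia. apply HN. lia.
  - destruct IHM as [N HN]. destruct (Hc (S M) e He) as [N' HN'].
    exists (Nat.max N N'). intros m Hm i Hi. destruct (Nat.eq_dec i (S M)) as [->|Hne].
    + apply HN'. lia.
    + apply HN; lia.
Qed.

Lemma coordinate_limit n (s : nat -> nat -> R) :
  (forall m, in_manifold n (s m)) -> (forall i, Cauchy_crit (fun m => s m i)) ->
  exists q, in_manifold n q /\ forall i, Un_cv (fun m => s m i) (q i).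
Proof.
  intros Hs Hcc.
  exists (fun i => if (i <=? n + 1)%nat then proj1_sig (Rcomplete.R_complete _ (Hcc i)) else 0).
  split.
  - intros k Hk. rewrite (proj2 (Nat.leb_gt k (n + 1))) by lia. reflexivity.
  - intro i. destruct (i <=? n + 1)%nat eqn:Ei; [apply proj2_sig|].
    apply Nat.leb_gt in Ei. intros e He0. exists 0%nat. intros m _. unfold Rdist.
    rewrite Hs by lia. rewrite Rminus_0_r, Rabs_R0. lra.
Qed.

Section Metric.
Variables (n : nat) (f : nat -> R -> R) (eta : R -> R -> R).

Lemma fcoef_out j x : (j = 0 \/ n < j)%nat -> fcoef n f j x = 0.
Proof.
  intros [->|Hj]; [reflexivity|]. unfold fcoef.
  rewrite (proj2 (Nat.leb_gt j n)) by lia. rewrite Bool.andb_false_r. reflexivity.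
Qed.

Lemma fcoef_cont : (forall j, (1 <= j <= n)%nat -> smooth1 (f j)) ->
  forall j x, continuous (fcoef n f j) x.
Proof.
  intros Hf j x. unfold fcoef. destruct (andb (1 <=? j)%nat (j <=? n)%nat) eqn:E.
  - apply andb_prop in E. destruct E as [E1 E2].
    apply Nat.leb_le in E1. apply Nat.leb_le in E2.
    apply (@ex_derive_continuous R_AbsRing R_NormedModule (f j)).
    exact (Hf j (conj E1 E2) 1%nat x).
  - apply continuous_const.
Qed.

Definition conn (p : nat -> R) (j : nat) : R :=
  vprev p j * fcoef n f j (p 0%nat) - vnext n p j * fcoef n f (S j) (p 0%nat).

Lemma gstar_conn p w : gstar n f eta p w =
  (eta (p 0%nat) (p 1%nat))^2 * (w 0%nat)^2 +
  sum_f_R0 (fun j => (w (S j) + conn p j * w 0%nat)^2) n.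
Proof. reflexivity. Qed.

(* The key algebraic fact: the matrix (a_j) is skew, sum_j v_j a_j = 0, since the
   sum telescopes. Hence the fibre part of the metric does not change |v|. *)
Lemma conn_skew p : sum_f_R0 (fun j => p (S j) * conn p j) n = 0.
Proof.
  set (x := p 0%nat).
  rewrite (sum_eq _ (fun j => p (S j) * p j * fcoef n f j x
                              - p (S (S j)) * p (S j) * fcoef n f (S j) x)).
  - rewrite (sum_telescope (fun j => p (S j) * p j * fcoef n f j x)).
    rewrite !fcoef_out by lia. ring.
  - intros j _. unfold conn, vprev, vnext. fold x. destruct j as [|j].
    + rewrite (fcoef_out 0) by lia. destruct (0 + 1 <=? n)%nat eqn:E.
      * simpl. ring.
      * apply Nat.leb_gt in E. rewrite (fcoef_out 1) by lia. ring.
    + destruct (S j + 1 <=? n)%nat eqn:E.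
      * replace (S j + 2)%nat with (S (S (S j))) by lia. ring.
      * apply Nat.leb_gt in E. rewrite (fcoef_out (S (S j))) by lia. ring.
Qed.

Lemma conn_bound p j K F : (forall i, Rabs (p (S i)) <= K) ->
  (forall j, Rabs (fcoef n f j (p 0%nat)) <= F) -> Rabs (conn p j) <= 2 * K * F.
Proof.
  intros HK HF.
  assert (K0 : 0 <= K) by (specialize (HK 0%nat); pose proof (Rabs_pos (p 1%nat)); lra).
  assert (F0 : 0 <= F) by (specialize (HF 0%nat); pose proof (Rabs_pos (fcoef n f 0 (p 0%nat))); lra).
  assert (Hprev : Rabs (vprev p j) <= K) by (destruct j; simpl; [rewrite Rabs_R0; lra|apply HK]).
  assert (Hnext : Rabs (vnext n p j) <= K).
  { unfold vnext. destruct (j + 1 <=? n)%nat; [|rewrite Rabs_R0; lra].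
    replace (j + 2)%nat with (S (S j)) by lia. apply HK. }
  unfold conn, Rminus. eapply Rle_trans; [apply Rabs_triang|].
  rewrite Rabs_Ropp, !Rabs_mult.
  assert (Rabs (vprev p j) * Rabs (fcoef n f j (p 0%nat)) <= K * F)
    by (apply Rmult_le_compat; auto; apply Rabs_pos).
  assert (Rabs (vnext n p j) * Rabs (fcoef n f (S j) (p 0%nat)) <= K * F)
    by (apply Rmult_le_compat; auto; apply Rabs_pos).
  lra.
Qed.

Lemma gstar_ge_fibre p w :
  sum_f_R0 (fun j => (w (S j) + conn p j * w 0%nat)^2) n <= gstar n f eta p w.
Proof.
  rewrite gstar_conn.
  assert (0 <= (eta (p 0%nat) (p 1%nat))^2 * (w 0%nat)^2) by (apply Rmult_le_pos; apply pow2_ge_0).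
  lra.
Qed.

Lemma gstar_ge_base p w : (eta (p 0%nat) (p 1%nat))^2 * (w 0%nat)^2 <= gstar n f eta p w.
Proof.
  rewrite gstar_conn. pose proof (sumsq_nonneg (fun j => w (S j) + conn p j * w 0%nat) n).
  cbv beta in H. lra.
Qed.

Definition radius (p : nat -> R) : R := sqrt (1 + sum_f_R0 (fun j => (p (S j))^2) n).

Lemma radius_ge_1 p : 1 <= radius p.
Proof.
  unfold radius. rewrite <- sqrt_1 at 1. apply sqrt_le_1_alt.
  pose proof (sumsq_nonneg (fun j => p (S j)) n). cbv beta in H. lra.
Qed.

Lemma radius_ext p q : (forall k, p k = q k) -> radius p = radius q.
Proof. intro H. unfold radius. do 2 f_equal. apply sum_eq. intros; rewrite H; auto. Qed.

Lemma fibre_le_radius p : in_manifold n p -> forall i, Rabs (p (S i)) <= radius p.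
Proof.
  intros Hm i. destruct (Compare_dec.le_lt_dec i n) as [Hi|Hi].
  - unfold radius. rewrite <- sqrt_Rsqr_abs. apply sqrt_le_1_alt.
    pose proof (sum_term_le (fun j => (p (S j))^2) n i (fun j => pow2_ge_0 _) Hi).
    cbv beta in H. unfold Rsqr. replace (p (S i) * p (S i)) with (p (S i)^2) by ring. lra.
  - rewrite Hm by lia. rewrite Rabs_R0. pose proof (radius_ge_1 p). lra.
Qed.

Hypothesis Hf : forall j x, continuous (fcoef n f j) x.
Hypothesis He : forall x u, continuous (fun p : R * R => eta (fst p) (snd p)) (x, u).

Lemma gstar_cont (c d : nat -> R -> R) t0 :
  (forall k, continuous (c k) t0) -> (forall k, continuous (d k) t0) ->
  continuous (fun t => gstar n f eta (fun k => c k t) (fun k => d k t)) t0.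
Proof.
  intros Hc Hd. unfold gstar. apply cont_plus.
  - apply cont_mult; apply cont_pow2; auto.
    apply (continuous_comp_2 (c 0%nat) (c 1%nat) eta); auto.
  - apply cont_sum. intros j _. apply cont_pow2. apply cont_plus; [auto|].
    apply cont_mult; [|auto]. apply cont_minus; apply cont_mult.
    + destruct j; simpl; [apply continuous_const|auto].
    + apply (continuous_comp (c 0%nat) (fcoef n f j)); auto.
    + unfold vnext. destruct (j + 1 <=? n)%nat; [auto|apply continuous_const].
    + apply (continuous_comp (c 0%nat) (fcoef n f (S j))); auto.
Qed.

Section Curve.
Variable c : nat -> R -> R.
Hypothesis Hc : forall k t, ex_derive (c k) t /\ continuous (Derive (c k)) t.

Definition speed (t : R) : R :=
  sqrt (gstar n f eta (fun k => c k t) (fun k => Derive (c k) t)).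

Lemma curve_length_speed : curve_length n f eta c = RInt speed 0 1.
Proof. reflexivity. Qed.

Lemma speed_nonneg t : 0 <= speed t.
Proof. apply sqrt_pos. Qed.

Lemma speed_cont t : continuous speed t.
Proof.
  apply (continuous_comp _ sqrt); [|apply continuous_sqrt]. apply gstar_cont.
  - intro k. apply (@ex_derive_continuous R_AbsRing R_NormedModule (c k)). apply Hc.
  - intro k. apply Hc.
Qed.

Lemma base_rate_le_speed t m : 0 < m -> m <= eta (c 0%nat t) (c 1%nat t) ->
  Rabs (Derive (c 0%nat) t) <= speed t / m.
Proof.
  intros Hm Hme. apply (Rmult_le_reg_r m); auto. field_simplify; [|lra].
  apply Rle_trans with (Rabs (eta (c 0%nat t) (c 1%nat t) * Derive (c 0%nat) t)).
  - rewrite Rabs_mult, (Rabs_right (eta _ _)) by lra. rewrite Rmult_comm.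
    apply Rmult_le_compat_r; [apply Rabs_pos|lra].
  - unfold speed. rewrite <- (sqrt_pow2 (Rabs _)) by apply Rabs_pos.
    apply sqrt_le_1_alt. rewrite pow2_abs, Rpow_mult_distr.
    exact (gstar_ge_base (fun k => c k t) (fun k => Derive (c k) t)).
Qed.

Lemma fibre_rate_le_speed t j : (j <= n)%nat ->
  Rabs (Derive (c (S j)) t + conn (fun k => c k t) j * Derive (c 0%nat) t) <= speed t.
Proof.
  intro Hj. unfold speed. rewrite <- (sqrt_pow2 (Rabs _)) by apply Rabs_pos.
  apply sqrt_le_1_alt. rewrite pow2_abs.
  eapply Rle_trans; [|apply gstar_ge_fibre].
  apply (sum_term_le (fun j => (Derive (c (S j)) t + conn (fun k => c k t) j * Derive (c 0%nat) t)^2));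
    [intro; apply pow2_ge_0|auto].
Qed.

Lemma radius_derive t : is_derive (fun t => radius (fun k => c k t)) t
  (sum_f_R0 (fun j => c (S j) t * Derive (c (S j)) t) n / radius (fun k => c k t)).
Proof.
  assert (Hpos : 0 < 1 + sum_f_R0 (fun j => (c (S j) t)^2) n).
  { pose proof (sumsq_nonneg (fun j => c (S j) t) n). cbv beta in H. lra. }
  evar (l : R). assert (Hd : is_derive (fun t => radius (fun k => c k t)) t l).
  { apply (is_derive_sqrt (fun t => 1 + sum_f_R0 (fun j => (c (S j) t)^2) n)); [|exact Hpos].
    apply (is_derive_plus (fun _ => 1) (fun t => sum_f_R0 (fun j => (c (S j) t)^2) n)).
    - apply is_derive_const.
    - apply (is_derive_sum_f_R0 (fun j t => (c (S j) t)^2)).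
      intro j. apply is_derive_pow. apply Derive_correct. apply Hc. }
  subst l. match goal with Hd : is_derive _ _ ?l |- is_derive _ _ ?l' => replace l' with l end; [exact Hd|].
  change (plus (zero : R) ?x) with (0 + x). rewrite Rplus_0_l.
  rewrite (sum_eq _ (fun j => (c (S j) t * Derive (c (S j)) t) * 2))
    by (intros i _; simpl; ring).
  rewrite <- scal_sum. unfold radius. field. apply Rgt_not_eq, sqrt_lt_R0, Hpos.
Qed.

(* Skewness of (a_j) plus Cauchy-Schwarz: the radius grows at most at unit speed. *)
Lemma radius_rate_le_speed t :
  sum_f_R0 (fun j => c (S j) t * Derive (c (S j)) t) n / radius (fun k => c k t) <= speed t.
Proof.
  set (p := fun k => c k t). set (x' := Derive (c 0%nat) t).
  set (w := fun j => Derive (c (S j)) t + conn p j * x').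
  set (X := sum_f_R0 (fun j => c (S j) t * Derive (c (S j)) t) n).
  set (V := sum_f_R0 (fun j => (p (S j))^2) n).
  set (W := sum_f_R0 (fun j => (w j)^2) n).
  assert (HX : X = sum_f_R0 (fun j => p (S j) * w j) n).
  { unfold w. rewrite (sum_eq _ (fun j => c (S j) t * Derive (c (S j)) t + p (S j) * conn p j * x'))
      by (intros i _; unfold p; ring).
    rewrite plus_sum, <- (scal_sum (fun j => p (S j) * conn p j)), conn_skew.
    unfold X. ring. }
  assert (HV : 0 <= V) by apply (sumsq_nonneg (fun j => p (S j))).
  assert (HW : 0 <= W) by apply sumsq_nonneg.
  assert (HXSW : X <= sqrt V * sqrt W).
  { rewrite <- sqrt_mult_alt by exact HV. eapply Rle_trans; [apply Rle_abs|].
    rewrite <- (sqrt_pow2 (Rabs X)) by apply Rabs_pos. apply sqrt_le_1_alt.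
    rewrite pow2_abs, HX. apply sum_cauchy_schwarz. }
  assert (HVP : sqrt V <= radius p) by (apply sqrt_le_1_alt; unfold V; lra).
  assert (HWG : sqrt W <= speed t)
    by (apply sqrt_le_1_alt; exact (gstar_ge_fibre p (fun k => Derive (c k) t))).
  pose proof (radius_ge_1 p). pose proof (sqrt_pos V). pose proof (sqrt_pos W).
  fold p X. apply (Rmult_le_reg_r (radius p)); [lra|]. field_simplify; [|lra].
  apply Rle_trans with (sqrt V * sqrt W); [lra|].
  apply Rmult_le_compat; auto.
Qed.

Lemma arc_length_bounds s : 0 <= s <= 1 -> 0 <= RInt speed 0 s <= RInt speed 0 1.
Proof. apply RInt_nonneg_initial; [apply speed_cont|apply speed_nonneg]. Qed.

Lemma radius_along_curve s : 0 <= s <= 1 ->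
  radius (fun k => c k s) <= radius (fun k => c k 0) + RInt speed 0 s.
Proof.
  intro Hs.
  enough (radius (fun k => c k s) - radius (fun k => c k 0) <= 1 * RInt speed 0 s) by lra.
  apply (increment_le_integral _ _ speed 1 radius_derive speed_cont); [|exact Hs].
  intros t _. rewrite Rmult_1_l. apply radius_rate_le_speed.
Qed.

Lemma base_along_curve m s : 0 < m ->
  (forall t, 0 <= t <= 1 -> m <= eta (c 0%nat t) (c 1%nat t)) -> 0 <= s <= 1 ->
  Rabs (c 0%nat s - c 0%nat 0) <= RInt speed 0 s / m.
Proof.
  intros Hm Hme Hs. unfold Rdiv. rewrite Rmult_comm.
  apply abs_increment_le_integral; [intro; apply Hc|apply speed_cont| |exact Hs].
  intros t Ht. rewrite Rmult_comm. apply base_rate_le_speed; auto.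
Qed.

Lemma fibre_along_curve m A j : 0 < m -> (j <= n)%nat ->
  (forall t, 0 <= t <= 1 -> m <= eta (c 0%nat t) (c 1%nat t)) ->
  (forall t, 0 <= t <= 1 -> Rabs (conn (fun k => c k t) j) <= A) ->
  Rabs (c (S j) 1 - c (S j) 0) <= (1 + A / m) * RInt speed 0 1.
Proof.
  intros Hm Hj Hme HA.
  apply abs_increment_le_integral; [intro; apply Hc|apply speed_cont| |lra].
  intros t Ht.
  set (a := conn (fun k => c k t) j). set (x' := Derive (c 0%nat) t).
  pose proof (fibre_rate_le_speed t j Hj) as Hw. fold a x' in Hw.
  pose proof (base_rate_le_speed t m Hm (Hme t Ht)) as Hx. fold x' in Hx.
  assert (Hax : Rabs a * Rabs x' <= A * (speed t / m))
    by (apply Rmult_le_compat; [apply Rabs_pos|apply Rabs_pos|apply HA; auto|auto]).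
  replace (Derive (c (S j)) t) with ((Derive (c (S j)) t + a * x') - a * x') by ring.
  unfold Rminus. eapply Rle_trans; [apply Rabs_triang|].
  rewrite Rabs_Ropp, Rabs_mult. replace ((1 + A / m) * speed t) with (speed t + A * (speed t / m))
    by (field; lra). lra.
Qed.
Lemma endpoint_displacement m A : 0 < m -> 0 <= A ->
  (forall t, in_manifold n (fun k => c k t)) ->
  (forall t, 0 <= t <= 1 -> m <= eta (c 0%nat t) (c 1%nat t)) ->
  (forall t j, 0 <= t <= 1 -> Rabs (conn (fun k => c k t) j) <= A) ->
  forall k, Rabs (c k 1 - c k 0) <= (1 / m + 1 + A / m) * RInt speed 0 1.
Proof.
  intros Hm HA Hman Hme Hconn k.
  assert (L0 : 0 <= RInt speed 0 1) by (apply (arc_length_bounds 1); lra).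
  assert (0 <= A / m) by (apply Rmult_le_pos; [|apply Rlt_le, Rinv_0_lt_compat]; lra).
  assert (0 <= 1 / m * RInt speed 0 1) by (apply Rmult_le_pos; [apply Rlt_le, Rdiv_lt_0_compat|]; lra).
  destruct k as [|j].
  - pose proof (base_along_curve m 1 Hm Hme ltac:(lra)). unfold Rdiv in *. nra.
  - destruct (Compare_dec.le_lt_dec j n) as [Hj|Hj].
    + pose proof (fibre_along_curve m A j Hm Hj Hme (fun t Ht => Hconn t j Ht)). nra.
    + rewrite (Hman 1 (S j)), (Hman 0 (S j)) by lia. rewrite Rminus_0_r, Rabs_R0. nra.
Qed.
End Curve.

Lemma segment_adm (p q : nat -> R) : in_manifold n p -> in_manifold n q ->
  adm_curve n (fun k t => p k + t * (q k - p k)) p q /\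
  forall k t, Derive (fun t => p k + t * (q k - p k)) t = q k - p k.
Proof.
  intros Hp Hq.
  assert (Hd : forall k t, is_derive (fun t => p k + t * (q k - p k)) t (q k - p k))
    by (intros k t; auto_derive; [auto|ring]).
  assert (HD : forall k t, Derive (fun t => p k + t * (q k - p k)) t = q k - p k)
    by (intros; apply is_derive_unique; auto).
  split; [|exact HD]. split; [|split; [|split]].
  - intros t k Hk. rewrite Hp, Hq by auto. ring.
  - intros k t. split; [eexists; apply Hd|].
    apply (continuous_ext (fun _ => q k - p k)); [intros; rewrite HD; auto|apply continuous_const].
  - intro k. ring.
  - intro k. ring.
Qed.

Lemma gstar_le_sup p w d E A :
  Rabs (eta (p 0%nat) (p 1%nat)) <= E -> (forall j, Rabs (conn p j) <= A) ->
  (forall k, Rabs (w k) <= d) ->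
  gstar n f eta p w <= d^2 * (E^2 + INR (S n) * (1 + A)^2).
Proof.
  intros HE HA Hw.
  assert (d0 : 0 <= d) by (specialize (Hw 0%nat); pose proof (Rabs_pos (w 0%nat)); lra).
  assert (A0 : 0 <= A) by (specialize (HA 0%nat); pose proof (Rabs_pos (conn p 0)); lra).
  rewrite gstar_conn.
  assert (Tbase : (eta (p 0%nat) (p 1%nat))^2 * (w 0%nat)^2 <= E^2 * d^2)
    by (apply Rmult_le_compat; try apply pow2_ge_0; apply sq_le_of_abs_le; auto).
  assert (Tfibre : sum_f_R0 (fun j => (w (S j) + conn p j * w 0%nat)^2) n
                   <= sum_f_R0 (fun _ => (d * (1 + A))^2) n).
  { apply sum_Rle. intros j _. apply sq_le_of_abs_le.
    eapply Rle_trans; [apply Rabs_triang|]. rewrite Rabs_mult.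
    assert (Rabs (conn p j) * Rabs (w 0%nat) <= A * d)
      by (apply Rmult_le_compat; auto; apply Rabs_pos).
    pose proof (Hw (S j)). lra. }
  rewrite sum_cte in Tfibre. nra.
Qed.

Lemma gstar_local_bound q : in_manifold n q ->
  exists δ, 0 < δ /\ exists Q, 0 <= Q /\ forall p w d,
    (forall k, Rabs (p k - q k) < δ) -> (forall k, Rabs (w k) <= d) ->
    gstar n f eta p w <= (d * Q)^2.
Proof.
  intro Hq.
  set (V := sum_f_R0 (fun k => Rabs (q k)) (S n)).
  assert (HV : forall k, Rabs (q k) <= V).
  { intro k. destruct (Compare_dec.le_lt_dec k (S n)).
    - apply (sum_term_le (fun k => Rabs (q k))); [intro; apply Rabs_pos|auto].
    - rewrite Hq by lia. rewrite Rabs_R0. apply cond_pos_sum. intro; apply Rabs_pos. }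
  destruct (local_bound2 eta (q 0%nat) (q 1%nat) (He _ _)) as [δ1 [Hδ1 HE]].
  set (E := Rabs (eta (q 0%nat) (q 1%nat)) + 1).
  destruct (local_bound (fcoef n f) (q 0%nat) (S n)) as [δ2 [Hδ2 [F [F0 HF0]]]]; [intro; auto|].
  assert (HF : forall j x, Rabs (x - q 0%nat) < δ2 -> Rabs (fcoef n f j x) <= F).
  { intros j x Hx. destruct (Compare_dec.le_lt_dec j (S n)); auto.
    rewrite fcoef_out by lia. rewrite Rabs_R0; lra. }
  set (A := 2 * (V + 1) * F).
  exists (Rmin (Rmin δ1 δ2) 1). split; [apply Rmin_pos; [apply Rmin_pos|]; lra|].
  exists (sqrt (E^2 + INR (S n) * (1 + A)^2)). split; [apply sqrt_pos|].
  intros p w d Hp Hw.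
  pose proof (Rmin_l (Rmin δ1 δ2) 1). pose proof (Rmin_r (Rmin δ1 δ2) 1).
  pose proof (Rmin_l δ1 δ2). pose proof (Rmin_r δ1 δ2).
  assert (Hpb : forall k, Rabs (p k) <= V + 1).
  { intro k. pose proof (Rabs_triang (p k - q k) (q k)).
    replace (p k - q k + q k) with (p k) in H3 by ring. specialize (Hp k). specialize (HV k). lra. }
  rewrite Rpow_mult_distr, pow2_sqrt
    by (apply Rplus_le_le_0_compat; [apply pow2_ge_0|apply Rmult_le_pos; [apply pos_INR|apply pow2_ge_0]]).
  apply gstar_le_sup; [|intro j; apply conn_bound|exact Hw].
  - apply HE; [specialize (Hp 0%nat)|specialize (Hp 1%nat)]; lra.
  - intro; auto.
  - intro; apply HF. specialize (Hp 0%nat). lra.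
Qed.
(* Consequently, points close to q in every coordinate are close to q for the
   Riemannian distance: join them to q by a straight segment. *)
Lemma segment_short q : in_manifold n q ->
  exists δ, 0 < δ /\ exists Q, 0 <= Q /\ forall p d, in_manifold n p -> d < δ ->
    (forall k, Rabs (p k - q k) <= d) -> Rbar_le (rdist n f eta p q) (Finite (d * Q)).
Proof.
  intro Hq. destruct (gstar_local_bound q Hq) as [δ [Hδ [Q [Q0 HQ]]]].
  exists δ. split; [exact Hδ|]. exists Q. split; [exact Q0|].
  intros p d Hp Hd Hpq.
  assert (d0 : 0 <= d) by (specialize (Hpq 0%nat); pose proof (Rabs_pos (p 0%nat - q 0%nat)); lra).
  destruct (segment_adm p q Hp Hq) as [Hadm HD].
  set (c := fun k t => p k + t * (q k - p k)).
  eapply Rbar_le_trans; [apply Glb_Rbar_le_member; exists c; split; [exact Hadm|reflexivity]|].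
  simpl. rewrite curve_length_speed.
  apply Rle_trans with (RInt (fun _ => d * Q) 0 1).
  2: { rewrite RInt_const. change (scal (1 - 0) (d * Q)) with ((1 - 0) * (d * Q)). lra. }
  apply RInt_le; [lra| |apply ex_RInt_const|].
  { apply (@ex_RInt_continuous R_CompleteNormedModule). intros. apply speed_cont. apply Hadm. }
  intros t Ht. unfold speed.
  rewrite <- (sqrt_pow2 (d * Q)) by (apply Rmult_le_pos; auto).
  apply sqrt_le_1_alt. apply HQ.
  - intro k. unfold c. replace (p k + t * (q k - p k) - q k) with ((1 - t) * (p k - q k)) by ring.
    rewrite Rabs_mult, Rabs_right by lra. specialize (Hpq k).
    pose proof (Rabs_pos (p k - q k)). nra.
  - intro k. unfold c. rewrite HD, Rabs_minus_sym. auto.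
Qed.

Lemma rdist_cv_of_coordinate_cv (s : nat -> nat -> R) q :
  (forall m, in_manifold n (s m)) -> in_manifold n q ->
  (forall i, Un_cv (fun m => s m i) (q i)) ->
  forall e, 0 < e -> exists N, forall m, (N <= m)%nat -> Rbar_lt (rdist n f eta (s m) q) (Finite e).
Proof.
  intros Hs Hq Hcv e He0.
  destruct (segment_short q Hq) as [δ [Hδ [Q [Q0 HQ]]]].
  set (d := Rmin (δ / 2) (e / (2 * (Q + 1)))).
  assert (d0 : 0 < d) by (apply Rmin_pos; apply Rdiv_lt_0_compat; lra).
  assert (d <= δ / 2) by apply Rmin_l. assert (d <= e / (2 * (Q + 1))) by apply Rmin_r.
  destruct (uniform_cv_finite s q (n + 1) Hcv d d0) as [N HN].
  exists N. intros m Hm.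
  eapply Rbar_le_lt_trans; [apply (HQ (s m) d (Hs m)); [lra|]|].
  { intro k. destruct (Compare_dec.le_lt_dec k (n + 1)).
    - left. apply HN; auto.
    - rewrite Hs, Hq by lia. rewrite Rminus_0_r, Rabs_R0. lra. }
  simpl. assert (d * Q <= e / (2 * (Q + 1)) * Q) by (apply Rmult_le_compat_r; lra).
  assert (e / (2 * (Q + 1)) * Q < e)
    by (apply (Rmult_lt_reg_r (2 * (Q + 1))); [lra|field_simplify; nra]).
  lra.
Qed.

Variable r : R -> R.
Hypothesis Hr_cont : forall u, continuous r u.
Hypothesis Hr_pos : forall u, 0 < r u.
Hypothesis Hr_le : forall x u, r u <= eta x u.

(* The heart of completeness: a curve of length L <= 1 starting in the region
   {radius <= R0, |x| <= X0} stays in a compact region, where eta is bounded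
   below and the f_j are bounded; hence its endpoint is displaced by at most C L
   in every coordinate. *)
Lemma short_curve_displacement (R0 X0 : R) :
  exists C, 0 <= C /\ forall c p q, adm_curve n c p q ->
    radius p <= R0 -> Rabs (p 0%nat) <= X0 -> curve_length n f eta c <= 1 ->
    radius q <= radius p + curve_length n f eta c /\
    forall k, Rabs (q k - p k) <= C * curve_length n f eta c.
Proof.
  (* Constants: K bounds the fibre coordinates along the curve, m = min r on
     [-K, K] bounds eta from below, X1 bounds x, F bounds the f_j on [-X1, X1]. *)
  set (K := Rmax R0 0 + 1).
  assert (K1 : 1 <= K) by (unfold K; pose proof (Rmax_r R0 0); lra).
  destruct (continuity_ab_min r (-K) K) as [umin [Hmin _]]; [lra|
    intros; apply continuity_pt_filterlim; apply Hr_cont|].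
  set (m := r umin). assert (m0 : 0 < m) by apply Hr_pos.
  set (X1 := Rabs X0 + 1 / m).
  assert (X1p : 0 <= X1) by (unfold X1; pose proof (Rabs_pos X0);
                             assert (0 < 1 / m) by (apply Rdiv_lt_0_compat; lra); lra).
  destruct (segment_bound (fcoef n f) (-X1) X1 n) as [F [F0 HF0]]; [lra|auto|].
  assert (HF : forall j x, -X1 <= x <= X1 -> Rabs (fcoef n f j x) <= F).
  { intros j x Hx. destruct (Compare_dec.le_lt_dec j n); auto.
    rewrite fcoef_out by lia. rewrite Rabs_R0; lra. }
  assert (Hm1 : 0 <= 1 / m) by (apply Rlt_le, Rdiv_lt_0_compat; lra).
  assert (Hm2 : 0 <= 2 * K * F / m) by (apply Rmult_le_pos; [nra|apply Rlt_le, Rinv_0_lt_compat; lra]).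
  exists (1 / m + 1 + 2 * K * F / m). split; [lra|].
  intros c p q [Hman [Hd [H0 H1]]] HP HX HL.
  rewrite curve_length_speed in *. set (L := RInt (speed c) 0 1) in *.
  assert (Hp : forall k, p k = c k 0) by (intro; symmetry; auto).
  assert (Hq : forall k, q k = c k 1) by (intro; symmetry; auto).
  assert (Hrad : forall s, 0 <= s <= 1 -> radius (fun k => c k s) <= radius p + L).
  { intros s Hs. rewrite (radius_ext p (fun k => c k 0)) by auto.
    pose proof (radius_along_curve c Hd s Hs). pose proof (arc_length_bounds c Hd s Hs).
    unfold L; lra. }
  assert (Hfib : forall t, 0 <= t <= 1 -> forall i, Rabs (c (S i) t) <= K).
  { intros t Ht i. eapply Rle_trans; [apply (fibre_le_radius (fun k => c k t)); apply Hman|].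
    specialize (Hrad t Ht). pose proof (Rmax_l R0 0). unfold K. lra. }
  assert (Heta : forall t, 0 <= t <= 1 -> m <= eta (c 0%nat t) (c 1%nat t)).
  { intros t Ht. eapply Rle_trans; [|apply Hr_le]. apply Hmin.
    apply Rabs_le_between. apply (Hfib t Ht 0%nat). }
  assert (Hbase : forall s, 0 <= s <= 1 -> Rabs (c 0%nat s - p 0%nat) <= L / m).
  { intros s Hs. rewrite Hp. eapply Rle_trans; [apply (base_along_curve c Hd m s); auto|].
    apply Rmult_le_compat_r; [apply Rlt_le, Rinv_0_lt_compat; lra|apply arc_length_bounds; auto]. }
  assert (Hx : forall t, 0 <= t <= 1 -> -X1 <= c 0%nat t <= X1).
  { intros t Ht. specialize (Hbase t Ht). apply Rabs_le_between. unfold X1.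
    assert (L / m <= 1 / m) by (apply Rmult_le_compat_r; [apply Rlt_le, Rinv_0_lt_compat|]; lra).
    pose proof (Rabs_triang (c 0%nat t - p 0%nat) (p 0%nat)).
    replace (c 0%nat t - p 0%nat + p 0%nat) with (c 0%nat t) in H2 by ring.
    pose proof (Rle_abs X0). lra. }
  split; [rewrite (radius_ext q (fun k => c k 1)) by auto; apply Hrad; lra|].
  intro k. rewrite Hp, Hq. apply (endpoint_displacement c Hd m); auto; [nra|].
  intros t j Ht. apply conn_bound; [intro; apply Hfib; auto|intro; apply HF, Hx; auto].
Qed.

(* A Cauchy sequence for rdist is, uniformly, Cauchy in every coordinate: its tail
   is joined to a fixed term by curves of length <= 1, which stay in one
   compact region, so [short_curve_displacement] applies with a uniform C. *)
Lemma rdist_cauchy_coordinates (s : nat -> nat -> R) :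
  (forall e, 0 < e -> exists N, forall m k, (N <= m)%nat -> (N <= k)%nat ->
     Rbar_lt (rdist n f eta (s m) (s k)) (Finite e)) ->
  forall e, 0 < e -> exists N, forall m k, (N <= m)%nat -> (N <= k)%nat ->
    forall i, Rabs (s k i - s m i) < e.
Proof.
  intros Hcau.
  assert (short_curve : forall m k e, Rbar_lt (rdist n f eta (s m) (s k)) (Finite e) ->
            exists c, adm_curve n c (s m) (s k) /\ curve_length n f eta c < e).
  { intros m k e H. destruct (Glb_Rbar_lt_witness _ _ H) as [L [[c [Hc ->]] HL]]. eauto. }
  destruct (Hcau 1 Rlt_0_1) as [N0 HN0]. set (p0 := s N0).
  destruct (short_curve_displacement (radius p0) (Rabs (p0 0%nat))) as [C0 [C00 HC0]].
  assert (Htail : forall m, (N0 <= m)%nat ->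
            radius (s m) <= radius p0 + 1 /\ Rabs (s m 0%nat) <= Rabs (p0 0%nat) + C0).
  { intros m Hm. destruct (short_curve N0 m 1 (HN0 N0 m (le_n _) Hm)) as [c [Hc HL]].
    destruct (HC0 c p0 (s m) Hc (Rle_refl _) (Rle_refl _) ltac:(lra)) as [Ha Hb].
    split; [lra|]. specialize (Hb 0%nat).
    assert (C0 * curve_length n f eta c <= C0) by nra.
    pose proof (Rabs_triang (s m 0%nat - p0 0%nat) (p0 0%nat)).
    replace (s m 0%nat - p0 0%nat + p0 0%nat) with (s m 0%nat) in H0 by ring. lra. }
  destruct (short_curve_displacement (radius p0 + 1) (Rabs (p0 0%nat) + C0)) as [C1 [C10 HC1]].
  intros e He0. set (e' := Rmin 1 (e / (C1 + 1))).
  assert (e'0 : 0 < e') by (apply Rmin_pos; [lra|apply Rdiv_lt_0_compat; lra]).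
  assert (e' <= 1) by apply Rmin_l. assert (e' <= e / (C1 + 1)) by apply Rmin_r.
  destruct (Hcau e' e'0) as [N' HN'].
  exists (Nat.max N0 N'). intros m k Hm Hk i.
  destruct (short_curve m k e' (HN' m k ltac:(lia) ltac:(lia))) as [c [Hc HL]].
  destruct (Htail m ltac:(lia)) as [R1 R2].
  destruct (HC1 c (s m) (s k) Hc R1 R2 ltac:(lra)) as [_ Hb]. specialize (Hb i).
  assert (C1 * curve_length n f eta c <= C1 * (e / (C1 + 1))) by (apply Rmult_le_compat_l; lra).
  assert (C1 * (e / (C1 + 1)) < e) by (apply (Rmult_lt_reg_r (C1 + 1)); [lra|field_simplify; lra]).
  lra.
Qed.
End Metric.

Theorem lemma3p2 (n : nat) (f : nat -> R -> R) (eta : R -> R -> R) (r : R -> R) :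
  (forall j : nat, (1 <= j <= n)%nat -> smooth1 (f j)) ->
  smooth2 eta ->
  (forall x u : R, 0 < eta x u) ->
  (forall u : R, continuous r u) ->
  (forall u : R, 0 < r u) ->
  (forall x u : R, r u <= eta x u) ->
  riem_complete n f eta.
Proof.
  intros Hf_smooth He_smooth _ Hr_cont Hr_pos Hr_le s Hs Hcau.
  pose proof (fcoef_cont n f Hf_smooth) as Hf.
  assert (He : forall x u, continuous (fun p : R * R => eta (fst p) (snd p)) (x, u))
    by (intros x u; exact (proj1 (He_smooth nil x u))).
  assert (Hcc : forall i, Cauchy_crit (fun m => s m i)).
  { intros i e He0.
    destruct (rdist_cauchy_coordinates n f eta Hf He r Hr_cont Hr_pos Hr_le s Hcau e He0) as [N HN].
    exists N. intros a b Ha Hb. apply HN; lia. }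
  destruct (coordinate_limit n s Hs Hcc) as [q [Hq Hcv]].
  exists q. split; [exact Hq|].
  exact (rdist_cv_of_coordinate_cv n f eta Hf He s q Hs Hq Hcv).
Qed.
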